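(* Fix $M$, integers $L,l$, and a job set $J$ with $L\ge D(J)$, and let $h$ be a hash function that is $(L,l)$-good for $J$. Then, for any choices of which eligible job to work on and for any greedy-enabled adversary, the algorithm GreedyWeakScheduler run on $J$ with parameters $L,l,h$ completes at least half of the jobs within $2Ll$ time steps.
   Context: Job-shop scheduling with unit jobs: machines $M$; jobs $J$ with sequences $\mathrm{seq}(j)\in M^*$, unique identifiers $\mathrm{ind}(j)\in I=\{1,\dots,|M|^c\}$, positions $\mathrm{pos}(j)_t\in\{0,\dots,\mathrm{len}(\mathrm{seq}(j))\}$ (completed at the last value) and states $\mathrm{state}(j)_t$; $\mathrm{que}(m)_t=\{j:\mathrm{seq}(j)_{\mathrm{pos}(j)_t}=m\}$; each step each machine works on at most one job in its queue, which advances one position. Greedy-enabled: each step, before the algorithm acts, an adversary knowing all positions and states may advance any jobs by arbitrary nonnegative amounts. $D(J)=\max_j\mathrm{len}(\mathrm{seq}(j))$. For $h:M^*\times I\to\{0,\dots,L-1\}$ with $h(j):=h(\mathrm{seq}(j),\mathrm{ind}(j))$: $\mathrm{virt}(j,i)=h(j)+i$ for $i<\mathrm{len}(\mathrm{seq}(j))$ and $\infty$ otherwise; $\mathrm{virt}(j)_t=\mathrm{virt}(j,\mathrm{pos}(j)_t)$. GreedyWeakScheduler$(m,L,l,h,t)$ at time $t$ (counted from the start of the subroutine): if $t=0$ set the states of all jobs in $\mathrm{que}(m)_t$ to $0$; let $T=\lfloor t/l\rfloor$, $Q=\{j\in\mathrm{que}(m)_t:\mathrm{virt}(j)_t=T,\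 \mathrm{state}(j)_t=0\}$; if $t\equiv0\pmod l$ and $|Q|>l$, set the states of all jobs in $Q$ to $1$; if $0<|Q|\le l$ work on an arbitrary $j\in Q$ (this is the choice of eligible job), else do nothing. Bad pattern (for fixed $M,L,l,J$): a collection of sets $B_{T,m}$, for $0\le T<2L$ and $m\in M$, of (job, sequence position) pairs such that $\mathrm{seq}(j)_i=m$ for all $(j,i)\in B_{T,m}$; each $j\in J$ appears at most once in $\bigsqcup B_{T,m}$; each $|B_{T,m}|\in\{0\}\cup(l,|J|]$; and $\sum|B_{T,m}|>|J|/2$. The bad pattern occurs for $h$ if $T=\mathrm{virt}(j,i)$ for all $(T,m)$ and all $(j,i)\in B_{T,m}$. The hash function $h$ is $(L,l)$-good for $J$ if no bad pattern (for $M,L,l,J$) occurs for $h$. *)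

From mathcomp Require Import all_boot.
Set Implicit Arguments.
Unset Strict Implicit.
Unset Printing Implicit Defensive.

Section Sched.
(* M : machines; Job : the job set J; sq j = seq(j); ind j = ind(j) in
   I = {1,...,|M|^c}, represented 0-based as 'I_(#|M|^c);
   h : M^* x I -> {0,...,L-1}. *)
Variables (M Job : finType) (c : nat) (sq : Job -> seq M)
  (ind : Job -> 'I_(#|M| ^ c)) (L l : nat)
  (h : seq M -> 'I_(#|M| ^ c) -> 'I_L).

Definition hj (j : Job) : nat := h (sq j) (ind j).

(* virt(j,i) = h(j)+i for i < len(seq(j)), infinity (None) otherwise *)
Definition virt (j : Job) (i : nat) : option nat :=
  if i < size (sq j) then Some (hj j + i) else None.

Definition D : nat := \max_(j : Job) size (sq j).

Definition que (pos : Job -> nat) (m : M) : {set Job} :=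
  [set j | (pos j < size (sq j)) && (nth m (sq j) (pos j) == m)].

(* Q = { j in que(m) : virt(j) = floor(t/l), state(j) = 0 };
   states are booleans, false = 0, true = 1 *)
Definition eligible (t : nat) (pos : Job -> nat) (st : Job -> bool) (m : M)
  : {set Job} :=
  [set j in que pos m | (virt j (pos j) == Some (t %/ l)) && ~~ st j].

(* One time step t (counted from the start of the subroutine), from
   positions/states (pos, st) to (pos2, st2): first the adversary advances
   jobs to padv (arbitrary nonnegative amounts, never past completion);
   then every machine m simultaneously runs GreedyWeakScheduler(m,L,l,h,t);
   w m is the (arbitrary) choice of eligible job of machine m. *)
Definition sched_step (t : nat) (pos : Job -> nat) (st : Job -> bool)
  (pos2 : Job -> nat) (st2 : Job -> bool) : Prop :=
  exists (padv : Job -> nat) (w : M -> option Job),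
    let st1 := fun j => if (t == 0) && [exists m, j \in que padv m]
                        then false else st j in
    let Q := eligible t padv st1 in
    [/\ forall j, pos j <= padv j <= size (sq j),
        forall m, 0 < #|Q m| <= l -> oapp (fun j => j \in Q m) false (w m),
        forall j, st2 j = st1 j ||
                  [exists m, [&& t %% l == 0, l < #|Q m| & j \in Q m]] &
        forall j, pos2 j = padv j +
                  [exists m, (0 < #|Q m| <= l) && (w m == Some j)]].

(* Bad pattern for M, L, l, J: sets B_{T,m} of (job, position) pairs,
   represented as sequences; global uniqueness of jobs in the disjoint
   union also makes each B_{T,m} a set. *)
Definition bad_pattern (B : 'I_(2 * L) -> M -> seq (Job * nat)) : Prop :=
  [/\ forall T m p, p \in B T m -> p.2 < size (sq p.1) /\ nth m (sq p.1) p.2 = m,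
      uniq (flatten [seq map fst (B T m) | T <- enum 'I_(2 * L), m <- enum M]),
      forall T m, size (B T m) = 0 \/ l < size (B T m) <= #|Job| &
      #|Job| < 2 * (\sum_(T : 'I_(2 * L)) \sum_(m : M) size (B T m))].

Definition pattern_occurs (B : 'I_(2 * L) -> M -> seq (Job * nat)) : Prop :=
  forall T m p, p \in B T m -> virt p.1 p.2 = Some (nat_of_ord T).

Definition hash_good : Prop :=
  ~ exists B, bad_pattern B /\ pattern_occurs B.

End Sched.

From mathcomp Require Import all_boot zify.
Set Implicit Arguments.
Unset Strict Implicit.
Unset Printing Implicit Defensive.

(* Call a job active at time t when it is unfinished and has state 0.  During
   phase T = t / l no active job has virtual time h(j) + pos(j) below T, and
   after r > 0 steps of the phase every machine has at most l - r active jobs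
   of virtual time T in its queue: at the phase start a machine either flags
   all its eligible jobs (more than l of them) or has at most l, and then it
   works on one of them in every step.  Hence at time 2Ll an active job would
   have virtual time at least 2L > h(j) + pos(j), so every unfinished job was
   flagged at some phase start T l by a machine m, in a group of more than l
   jobs of virtual time T.  If more than half of the jobs were unfinished,
   these groups B_{T,m} would form a bad pattern occurring for h.  (For l = 0
   nothing runs, and grouping the unfinished jobs by hash value and first
   machine already gives a bad pattern.) *)

Lemma uniq_flatten_map (K T : eqType) (ks : seq K) (f : K -> seq T) :
  uniq ks -> (forall k, uniq (f k)) ->
  (forall k1 k2 x, x \in f k1 -> x \in f k2 -> k1 = k2) ->
  uniq (flatten (map f ks)).
Proof.
move=> + Uf disj; elim: ks => [|k ks IH] //= /andP[kNks Uks].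
rewrite cat_uniq Uf IH // andbT; apply/hasPn => x /flattenP[_ /mapP[k' k'ks ->] xk'].
by apply/negP => xk; move: kNks; rewrite (disj _ _ _ xk xk') k'ks.
Qed.

Lemma sum_card_fibres (T X : finType) (key : T -> option X) :
  \sum_(x : X) #|[set j | key j == Some x]| = #|[set j | key j != None]|.
Proof.
rewrite -[RHS]sum1dep_card [RHS]big_mkcond /=.
under eq_bigr => x _ do rewrite -sum1dep_card big_mkcond /=.
rewrite exchange_big /=; apply: eq_bigr => j _.
case: (key j) => [x0|] /=; last by rewrite big1.
rewrite (bigD1 x0) //= eqxx big1 // => x xNx0.
by case: eqP => // -[x0x]; rewrite x0x eqxx in xNx0.
Qed.

Section Labelling.
Variables (M Job : finType) (c : nat) (sq : Job -> seq M)
  (ind : Job -> 'I_(#|M| ^ c)) (L l : nat)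
  (h : seq M -> 'I_(#|M| ^ c) -> 'I_L).
Variables (key : Job -> option ('I_(2 * L) * M)) (p : Job -> nat).

Hypothesis key_virt : forall j T m, key j = Some (T, m) ->
  nth m (sq j) (p j) = m /\ virt sq ind h j (p j) = Some (nat_of_ord T).
Hypothesis key_fibre : forall T m,
  #|[set j | key j == Some (T, m)]| = 0 \/ l < #|[set j | key j == Some (T, m)]|.
Hypothesis key_half : #|Job| < 2 * #|[set j | key j != None]|.

Definition key_fibre_pattern T m :=
  [seq (j, p j) | j <- enum [set j | key j == Some (T, m)]].

Lemma mem_key_fibre_pattern T m q :
  (q \in key_fibre_pattern T m) = (key q.1 == Some (T, m)) && (q.2 == p q.1).
Proof.
case: q => j i /=; apply/mapP/andP => [[j' + [-> ->]] | [kj /eqP->]].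
  by rewrite mem_enum inE => kj'.
by exists j; rewrite // mem_enum inE.
Qed.

Lemma key_fibre_bad_pattern : bad_pattern sq l key_fibre_pattern.
Proof.
have size_pat T m : size (key_fibre_pattern T m) = #|[set j | key j == Some (T, m)]|.
  by rewrite size_map cardE.
split.
- move=> T m [j i]; rewrite mem_key_fibre_pattern /=.
  move=> /andP[/eqP/key_virt[nth_m] + /eqP->].
  by rewrite /virt; case: ifP.
- rewrite -(map_allpairs (fun q => map fst (key_fibre_pattern q.1 q.2)) pair).
  apply: uniq_flatten_map.
  + by apply: allpairs_uniq; rewrite ?enum_uniq // => -[? ?] [? ?].
  + move=> [T m]; rewrite /key_fibre_pattern -map_comp map_id_in //; exact: enum_uniq.
  + move=> [T1 m1] [T2 m2] j /mapP[[j1 i1] + ->] /mapP[[j2 i2] + /= j12].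
    rewrite !mem_key_fibre_pattern -j12 /= => /andP[/eqP-> _] /andP[/eqP[-> ->] _] //.
- move=> T m; rewrite size_pat; case: (key_fibre T m) => [|l_lt]; [left | right] => //.
  by rewrite l_lt max_card.
- under eq_bigr => T _ do under eq_bigr => m _ do rewrite size_pat.
  rewrite pair_bigA (eq_bigr (fun q => #|[set j | key j == Some q]|)) => [|[] //].
  by rewrite sum_card_fibres.
Qed.

Lemma key_fibres_not_hash_good : ~ hash_good sq ind l h.
Proof.
apply; exists key_fibre_pattern; split; first exact: key_fibre_bad_pattern.
move=> T m [j i]; rewrite mem_key_fibre_pattern /=.
by move=> /andP[/eqP/key_virt[_ virt_j] /eqP->].
Qed.

End Labelling.

Lemma modn_last (t l : nat) : 0 < l -> l %| t.+1 -> (t %% l).+1 = l.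
Proof.
move=> l_gt0 l_dvd; have := divn_eq t.+1 l; rewrite divnS // modnS l_dvd /=.
by have := divn_eq t l; lia.
Qed.

Section Run.
Variables (M Job : finType) (c : nat) (sq : Job -> seq M)
  (ind : Job -> 'I_(#|M| ^ c)) (L l : nat)
  (h : seq M -> 'I_(#|M| ^ c) -> 'I_L).
Variables (N : nat) (pos padv : nat -> Job -> nat) (st : nat -> Job -> bool)
  (w : nat -> M -> option Job).

Local Notation hj := (hj sq ind h).

Definition st_reset t j :=
  if (t == 0) && [exists m, j \in que sq (padv t) m] then false else st t j.
Definition Q t := eligible sq ind l h t (padv t) (st_reset t).
Definition flags t m j := [&& t %% l == 0, l < #|Q t m| & j \in Q t m].
Definition worked t j := [exists m, (0 < #|Q t m| <= l) && (w t m == Some j)].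

Hypothesis run : forall t, t < N ->
  [/\ forall j, pos t j <= padv t j <= size (sq j),
      forall m, 0 < #|Q t m| <= l -> oapp (fun j => j \in Q t m) false (w t m),
      forall j, st t.+1 j = st_reset t j || [exists m, flags t m j] &
      forall j, pos t.+1 j = padv t j + worked t j].
Hypothesis pos0 : forall j, pos 0 j = 0.
Hypothesis l_gt0 : 0 < l.

(* [st 0] is arbitrary: the subroutine resets the states of queued jobs only. *)
Definition flagged t j := (t != 0) && st t j.
Definition active t j := (pos t j < size (sq j)) && ~~ flagged t j.
Definition waiting t d m := [set j | [&& active t j,
  nth m (sq j) (pos t j) == m & hj j + pos t j == d]].

Definition on_schedule t := forall j, active t j -> t %/ l <= hj j + pos t j.
Definition phase_bound t :=
  0 < t %% l -> forall m, #|waiting t (t %/ l) m| + t %% l <= l.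

Lemma mem_Q t m j : (j \in Q t m) = [&& padv t j < size (sq j),
  nth m (sq j) (padv t j) == m, hj j + padv t j == t %/ l & ~~ st_reset t j].
Proof. by rewrite !inE /virt; case: ltnP. Qed.

Lemma mem_que_nth (p : Job -> nat) j x :
  p j < size (sq j) -> j \in que sq p (nth x (sq j) (p j)).
Proof. by move=> p_lt; rewrite inE p_lt /= (set_nth_default x). Qed.

Lemma st_resetE t j : padv t j < size (sq j) -> st_reset t j = flagged t j.
Proof.
rewrite /st_reset /flagged; case: eqP => //= -> padv_lt.
have x : M by case: (sq j) padv_lt => [|x].
rewrite (_ : [exists m, _] = true) //; apply/existsP.
by exists (nth x (sq j) (padv 0 j)); apply: mem_que_nth.
Qed.

Lemma pos_le_size t j : t <= N -> pos t j <= size (sq j).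
Proof.
case: t => [|t] t_le; first by rewrite pos0.
have [/(_ j)/andP[_ padv_le] work _ ->] := run t_le.
rewrite /worked; case: existsP => [[m /andP[Q_le /eqP w_j]] | _]; last by rewrite addn0.
by move: (work m Q_le); rewrite w_j /= mem_Q addn1 => /andP[].
Qed.

Lemma active_of_padv t j : t < N ->
  padv t j < size (sq j) -> ~~ st_reset t j -> active t j.
Proof.
move=> t_lt padv_lt; have [/(_ j)/andP[pos_le _] _ _ _] := run t_lt.
by rewrite st_resetE // /active (leq_ltn_trans pos_le).
Qed.

Lemma active_succ t j : t < N -> active t.+1 j ->
  [/\ padv t j < size (sq j), ~~ st_reset t j & ~~ [exists m, flags t m j]].
Proof.
move=> t_lt; rewrite /active /flagged /=; have [_ _ -> ->] := run t_lt.
rewrite negb_or => /andP[pos_lt /andP[-> ->]]; split=> //.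
exact: leq_ltn_trans (leq_addr _ _) pos_lt.
Qed.

Lemma Q_sub_waiting t m : t < N -> on_schedule t ->
  Q t m \subset waiting t (t %/ l) m.
Proof.
move=> t_lt sched; apply/subsetP => j.
rewrite mem_Q => /and4P[padv_lt nth_m /eqP virt_j st_j].
have act := active_of_padv t_lt padv_lt st_j.
have [/(_ j)/andP[pos_le _] _ _ _] := run t_lt.
have pos_eq : pos t j = padv t j by have := sched j act; lia.
by rewrite inE act pos_eq nth_m virt_j !eqxx.
Qed.

Lemma padv_on_schedule t j : t < N -> on_schedule t -> active t.+1 j ->
  t %/ l <= hj j + padv t j.
Proof.
move=> t_lt sched /(active_succ t_lt)[padv_lt st_j _].
have [/(_ j)/andP[pos_le _] _ _ _] := run t_lt.
by apply: leq_trans (sched j (active_of_padv t_lt padv_lt st_j)) _; rewrite leq_add2l.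
Qed.

Lemma mem_waiting_nth t j x :
  active t j -> j \in waiting t (hj j + pos t j) (nth x (sq j) (pos t j)).
Proof.
move=> act; have /andP[pos_lt _] := act.
by rewrite inE act (set_nth_default x) // !eqxx.
Qed.

Lemma waiting_succ t m j : t < N -> on_schedule t ->
  j \in waiting t.+1 (t %/ l) m ->
  [/\ j \in Q t m, ~~ flags t m j & ~~ worked t j].
Proof.
move=> t_lt sched; rewrite inE => /and3P[act nth_m /eqP virt_j].
have [padv_lt st_j /existsPn/(_ m) no_flag] := active_succ t_lt act.
have virt_le := padv_on_schedule t_lt sched act.
have [padv_eq not_worked] : padv t j = pos t.+1 j /\ ~~ worked t j.
  have [_ _ _ pos_succ] := run t_lt.
  by move: virt_le (virt_j); rewrite pos_succ; case: (worked t j) => /=; lia.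
by rewrite mem_Q padv_lt padv_eq nth_m virt_j !eqxx.
Qed.

Lemma card_waiting_succ t m : t < N -> on_schedule t -> phase_bound t ->
  #|waiting t.+1 (t %/ l) m| + t %% l < l.
Proof.
move=> t_lt sched bound.
have [-> | [j0 j0_W]] := set_0Vmem (waiting t.+1 (t %/ l) m).
  by rewrite cards0 ltn_pmod.
have [j0_Q j0_no_flag _] := waiting_succ t_lt sched j0_W.
have Q_le : #|Q t m| + t %% l <= l.
  have [t_mod0 | t_mod_gt0] := posnP (t %% l).
    by move: j0_no_flag; rewrite /flags t_mod0 j0_Q eqxx andbT addn0 -leqNgt.
  apply: leq_trans (bound t_mod_gt0 m); rewrite leq_add2r.
  exact/subset_leq_card/Q_sub_waiting.
have Q_in : 0 < #|Q t m| <= l.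
  by apply/andP; split; [apply/card_gt0P; exists j0 | lia].
have [_ w_in _ _] := run t_lt.
have := w_in m Q_in; case w_m: (w t m) => [j'|] //= j'_Q.
have : waiting t.+1 (t %/ l) m \subset Q t m :\ j'.
  apply/subsetP => j j_W; have [j_Q _ not_worked] := waiting_succ t_lt sched j_W.
  rewrite in_setD1 j_Q andbT; apply: contraNneq not_worked => ->.
  by apply/existsP; exists m; rewrite Q_in w_m /=.
by move/subset_leq_card; move: Q_le; rewrite (cardsD1 j' (Q t m)) j'_Q; lia.
Qed.

Lemma schedule_invariant t : t <= N -> on_schedule t /\ phase_bound t.
Proof.
elim: t => [|t IH] t_le; first by split=> [j _ | ]; rewrite /phase_bound ?div0n ?mod0n.
have [sched bound] := IH (ltnW t_le).
have virt_ge j : active t.+1 j -> t %/ l <= hj j + pos t.+1 j.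
  move=> act; apply: leq_trans (padv_on_schedule t_le sched act) _.
  by have [_ _ _ ->] := run t_le; rewrite addnA leq_addr.
rewrite /on_schedule /phase_bound modnS divnS //; case: ifP => [l_dvd | _] /=; last first.
  by split=> [j /virt_ge | _ m] //; rewrite addnS; apply: card_waiting_succ.
split=> // j act; rewrite add1n ltn_neqAle virt_ge // andbT; apply/eqP => virt_j.
have x : M by case/andP: act; case: (sq j) => [|x].
have := card_waiting_succ (nth x (sq j) (pos t.+1 j)) t_le sched bound.
have : 0 < #|waiting t.+1 (t %/ l) (nth x (sq j) (pos t.+1 j))|.
  by apply/card_gt0P; exists j; rewrite virt_j mem_waiting_nth.
by have := modn_last l_gt0 l_dvd; lia.
Qed.

Lemma st_reset_pos t j : 0 < t -> st_reset t j = st t j.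
Proof. by rewrite /st_reset; case: t. Qed.

Lemma st_after_flags t m j : t < N -> flags t m j ->
  forall t', t < t' <= N -> st t' j.
Proof.
move=> t_lt f; elim=> [|t' IH] // /andP[]; rewrite ltnS leq_eqVlt => t_le t'_lt.
have [_ _ -> _] := run t'_lt; case/predU1P: t_le => [<- | t_lt'].
  by apply/orP; right; apply/existsP; exists m.
rewrite st_reset_pos ?(leq_ltn_trans _ t_lt') // IH //.
by rewrite t_lt' ltnW.
Qed.

Lemma flags_unique t1 t2 m1 m2 j : t1 < N -> t2 < N ->
  flags t1 m1 j -> flags t2 m2 j -> t1 = t2 /\ m1 = m2.
Proof.
wlog t12 : t1 t2 m1 m2 / t1 <= t2 => [hyp t1_lt t2_lt f1 f2|].
  have [t12 | /ltnW t21] := leqP t1 t2; first exact: hyp.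
  by have [-> ->] := hyp _ _ _ _ t21 t2_lt t1_lt f2 f1.
move=> t1_lt t2_lt f1 f2; have t_eq : t1 = t2.
  apply/eqP; rewrite eqn_leq t12 leqNgt; apply/negP => t12'.
  have st_j : st t2 j by apply: (st_after_flags t1_lt f1); rewrite t12' ltnW.
  by move: f2; rewrite /flags mem_Q st_reset_pos ?st_j ?andbF // (leq_ltn_trans _ t12').
split=> //; move: f1 f2; rewrite -t_eq /flags !mem_Q.
move=> /and3P[_ _ /and4P[padv_lt /eqP <- _ _]] /and3P[_ _ /and4P[_ /eqP <- _ _]].
exact: set_nth_default.
Qed.

Lemma flagged_exists_flags t j : t <= N -> flagged t j -> pos t j < size (sq j) ->
  exists t' m, t' < t /\ flags t' m j.
Proof.
elim: t => [|t IH] t_le // st_j pos_lt.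
have [/(_ j)/andP[pos_le _] _ st_succ pos_succ] := run t_le.
have padv_lt : padv t j < size (sq j).
  by rewrite (leq_ltn_trans _ pos_lt) // pos_succ leq_addr.
move: st_j; rewrite /flagged /= st_succ st_resetE // => /orP[fl | /existsP[m f]].
  have [t' [m [t'_lt f]]] := IH (ltnW t_le) fl (leq_ltn_trans pos_le padv_lt).
  by exists t', m; split=> //; apply: ltnW.
by exists t, m.
Qed.

Section Horizon.
Hypothesis N_eq : N = 2 * L * l.

Definition flag_key (j : Job) : option ('I_(2 * L) * M) :=
  [pick q : 'I_(2 * L) * M | flags (q.1 * l) q.2 j].

Lemma flag_keyE j T m : (flag_key j == Some (T, m)) = flags (T * l) m j.
Proof.
rewrite /flag_key; case: pickP => [[T' m'] /= f' | none]; last by rewrite (none (T, m)).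
apply/eqP/idP => [[<- <-] // | f].
have lt_N (T0 : 'I_(2 * L)) : T0 * l < N by rewrite N_eq ltn_pmul2r.
have [/eqP + ->] := flags_unique (lt_N T') (lt_N T) f' f.
by rewrite eqn_pmul2r // => /eqP/val_inj->.
Qed.

Lemma unfinished_flag_key j :
  D sq <= L -> pos N j != size (sq j) -> flag_key j != None.
Proof.
move=> D_le unfin; have pos_lt : pos N j < size (sq j).
  by rewrite ltn_neqAle unfin pos_le_size.
have fl : flagged N j.
  apply: contraT => not_fl.
  have act : active N j by rewrite /active pos_lt.
  have := (schedule_invariant (leqnn N)).1 j act.
  have size_le : size (sq j) <= L by apply: leq_trans D_le; exact: leq_bigmax.
  by rewrite {1}N_eq mulnK //; have := ltn_ord (h (sq j) (ind j)); rewrite /hj; lia.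
have [t [m [t_lt f]]] := flagged_exists_flags (leqnn N) fl pos_lt.
have T_lt : t %/ l < 2 * L by rewrite ltn_divLR // -N_eq.
rewrite /flag_key; case: pickP => // /(_ (Ordinal T_lt, m)) /=.
by case/and3P: (f) => l_dvd _ _; rewrite divnK ?f.
Qed.

Lemma half_finished : D sq <= L -> hash_good sq ind l h ->
  #|Job| <= 2 * #|[set j | pos N j == size (sq j)]|.
Proof.
move=> D_le good; rewrite leqNgt; apply/negP => few_done.
apply: (key_fibres_not_hash_good (key := flag_key)
  (p := fun j => if flag_key j is Some (T, _) then padv (T * l) j else 0)) good.
- move=> j T m kj; have := flag_keyE j T m; rewrite kj eqxx => /esym/and3P[_ _].
  rewrite mem_Q mulnK // => /and4P[padv_lt /eqP nth_m /eqP virt_j _].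
  by rewrite /virt padv_lt virt_j.
- move=> T m; have [Q_gt | Q_le] := ltnP l #|Q (T * l) m|; [right | left].
    rewrite (_ : [set j | _] = Q (T * l) m) //.
    by apply/setP => j; rewrite inE flag_keyE /flags modnMl Q_gt.
  by apply: eq_card0 => j; rewrite inE flag_keyE /flags ltnNge Q_le andbF.
- have : ~: [set j | pos N j == size (sq j)] \subset [set j | flag_key j != None].
    by apply/subsetP => j; rewrite !inE; exact: unfinished_flag_key.
  by move/subset_leq_card; have := cardsC [set j | pos N j == size (sq j)]; lia.
Qed.

End Horizon.
End Run.

Lemma hash_good0_half_nil (M Job : finType) (c : nat) (sq : Job -> seq M)
  (ind : Job -> 'I_(#|M| ^ c)) (L : nat) (h : seq M -> 'I_(#|M| ^ c) -> 'I_L) :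
  hash_good sq ind 0 h -> #|Job| <= 2 * #|[set j | 0 == size (sq j)]|.
Proof.
move=> good; rewrite leqNgt; apply/negP => few_nil.
pose key j := if sq j is m :: _
  then Some (widen_ord (leq_pmull L (isT : 0 < 2)) (h (sq j) (ind j)), m)
  else None.
apply: (key_fibres_not_hash_good (key := key) (p := fun _ => 0)) good.
- move=> j T m; rewrite /key /virt /hj.
  by case: (sq j) => [|x s] //= [<- <-]; rewrite addn0.
- by move=> T m; case: posnP; [left | right].
- have : ~: [set j | 0 == size (sq j)] \subset [set j | key j != None].
    by apply/subsetP => j; rewrite !inE /key; case: (sq j).
  by move/subset_leq_card; have := cardsC [set j | 0 == size (sq j)]; lia.
Qed.

Lemma bounded_choice (A B : Type) (a0 : A) (b0 : B) (N : nat)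
  (P : nat -> A -> B -> Prop) :
  (forall t, t < N -> exists a b, P t a b) ->
  exists f g, forall t, t < N -> P t (f t) (g t).
Proof.
elim: N => [|N IH] ex_ab; first by exists (fun _ => a0), (fun _ => b0).
have [f [g Pfg]] := IH (fun t t_lt => ex_ab t (ltnW t_lt)).
have [a [b Pab]] := ex_ab N (ltnSn N).
exists (fun t => if t == N then a else f t), (fun t => if t == N then b else g t).
by move=> t; rewrite ltnS leq_eqVlt; case: eqP => [-> | _] //= /Pfg.
Qed.

Theorem lemma5p12 (M Job : finType) (c : nat) (sq : Job -> seq M)
  (ind : Job -> 'I_(#|M| ^ c)) (L l : nat)
  (h : seq M -> 'I_(#|M| ^ c) -> 'I_L) :
  injective ind ->
  D sq <= L ->
  hash_good sq ind l h ->
  forall (pos : nat -> Job -> nat) (st : nat -> Job -> bool),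
    (forall j, pos 0 j = 0) ->
    (forall t, t < 2 * L * l ->
       sched_step sq ind l h t (pos t) (st t) (pos t.+1) (st t.+1)) ->
    #|Job| <= 2 * #|[set j | pos (2 * L * l) j == size (sq j)]|.
Proof.
(* Injectivity of [ind] matters for the existence of good hash functions only. *)
move=> _ D_le good pos st pos0 steps.
have [padv [w run]] := bounded_choice (fun _ => 0) (fun _ => None) steps.
have [l0 | l_gt0] := posnP l.
  move: good; rewrite l0 muln0; under eq_finset => j do rewrite pos0.
  exact: hash_good0_half_nil.
exact: (half_finished run pos0 l_gt0 erefl D_le good).
Qed.
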